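(* Let $X_0, X_1, X_2$ be three observables in a general physical theory with a set of states $\mathcal{S}$. Assume there is a finite set $\lambda(X)\subset\mathbb{R}$ (the spectrum) such that for every state $s\in\mathcal{S}$ and every $k\in\{0,1,2\}$, measuring $X_k$ on $s$ yields an outcome distributed according to a probability distribution $\Pr(X_k=\cdot\,|\,s)$ supported on $\lambda(X)$, and that every element of $\lambda(X)$ is a possible outcome of some $X_k$. Write $\langle X_k\rangle_s=\sum_{a\in\lambda(X)} a\Pr(X_k=a|s)$. Assume (M): for every state $s\in\mathcal{S}$, $\sum_{k=0}^2\langle X_k\rangle_s=0$. For a state $s$, define $$P_3\coloneqq\frac13\sum_{k=0}^2\Big(\Pr(X_k>0\,|\,s)+\tfrac12\Pr(X_k=0\,|\,s)\Big).$$ Let $x_+\coloneqq\min\{x\in\lambda(X):x>0\}$ and $-x_-\coloneqq\min\{x\in\lambda(X):x<0\}$ (each undefined if the corresponding set is empty). Then for every state $s$, $$P_3\le \mathbf{P}_3^G\coloneqq\begin{cases}\big(1+x_+/x_-\big)^{-1} & \text{if } \lambda(X) \text{ contains both positive and negative values and } \big(x_+<x_- \text{ or } 0\notin\lambda(X)\big),\\ 1/2 & \text{otherwise.}\end{cases}$$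
   Context: ''General theory'' means only that each observable, measured on a state, produces real outcomes with well-defined probabilities; no further structure is assumed beyond the hypotheses stated. The convention $\Theta(0)=1/2$ for the Heaviside step function is what gives the weight $1/2$ to the outcome $0$ in $P_3$. In the paper's convention, when the spectrum is nonnegative or nonpositive one of $x_\pm$ is undefined and the bound is $1/2$. *)

From HB Require Import structures.
From mathcomp Require Import all_boot all_order all_algebra.
Set Implicit Arguments. Unset Strict Implicit. Unset Printing Implicit Defensive.
Import Order.TTheory GRing.Theory Num.Theory.
Local Open Scope ring_scope.

Section Defs.
Variable R : realFieldType.

(* positive / negative parts of the spectrum (given as a duplicate-free list) *)
Definition posL (L : seq R) := [seq x <- L | 0 < x].
Definition negL (L : seq R) := [seq x <- L | x < 0].

(* x_+ := min { x in L | x > 0 }  (meaningful only when posL L is nonempty) *)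
Definition xplus (L : seq R) : R :=
  \big[Num.min/head 0 (posL L)]_(x <- posL L) x.

(* x_- := - min { x in L | x < 0 }  (meaningful only when negL L is nonempty) *)
Definition xminus (L : seq R) : R :=
  - \big[Num.min/head 0 (negL L)]_(x <- negL L) x.

Definition P3G (L : seq R) : R :=
  if [&& has (fun x => 0 < x) L, has (fun x => x < 0) L &
        (xplus L < xminus L) || (0 \notin L)]
  then (1 + xplus L / xminus L)^-1
  else 1 / 2.

(* p k a = Pr(X_k = a | s) for a fixed state s *)
Definition expect (L : seq R) (p : 'I_3 -> R -> R) (k : 'I_3) : R :=
  \sum_(a <- L) a * p k a.

Definition P3 (L : seq R) (p : 'I_3 -> R -> R) : R :=
  3^-1 * \sum_(k < 3)
    ((\sum_(a <- L | 0 < a) p k a) + 2^-1 * p k 0).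

End Defs.

(** The step function [Θ] with [Θ(0) = 1/2] turns [P_3] into the average of
    the expectations [E_s Θ(X_k)].  On the spectrum, [Θ] is dominated by an
    affine function [P_3^G + d a]: in the two-sided case the chord through
    [(-x_-, 0)] and [(x_+, 1)], otherwise a line through [(0, 1/2)].  Taking
    expectations, averaging over [k] and using [Σ_k <X_k> = 0] kills the
    linear term, leaving [P_3 <= P_3^G]. *)
From HB Require Import structures.
From mathcomp Require Import ring lra.
From mathcomp Require Import all_boot all_order all_algebra.
Import Order.TTheory GRing.Theory Num.Theory.
Local Open Scope ring_scope.

Lemma bigmin_head_mem {disp} {T : orderType disp} (x0 : T) (s : seq T) :
  s != [::] -> \big[Order.min/head x0 s]_(x <- s) x \in s.
Proof.
move=> s_nnil; rewrite big_seq; apply: (big_ind (fun x => x \in s)) => //.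
- by case: s s_nnil => //= x s _; rewrite mem_head.
- by move=> x y xs ys; rewrite /Order.min; case: ifP.
Qed.

Section HeavisideBound.
Context {R : realFieldType}.

Definition heaviside (a : R) : R :=
  if 0 < a then 1 else if a == 0 then 2^-1 else 0.

Lemma heaviside_le_chord (xp xm a : R) :
  0 < xp -> 0 < xm -> (0 < a -> xp <= a) -> (a < 0 -> - xm <= a) ->
  (a = 0 -> xp <= xm) ->
  heaviside a <= (a + xm) / (xp + xm).
Proof.
move=> xp_gt0 xm_gt0 pos_a neg_a zero_a.
rewrite /heaviside ler_pdivlMr ?addr_gt0 //.
case: ltrgtP => [a_gt0 | a_lt0 | a0].
- by have := pos_a a_gt0; lra.
- by have := neg_a a_lt0; lra.
- by have := zero_a (esym a0); rewrite -a0; lra.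
Qed.

Lemma heaviside_le_half (a : R) : a <= 0 -> heaviside a <= 2^-1.
Proof.
rewrite /heaviside leNgt; case: ltrgtP => // _ _.
by rewrite invr_ge0.
Qed.

Lemma sum_heavisideE (L : seq R) (p : R -> R) :
  uniq L -> (forall a, a \notin L -> p a = 0) ->
  \sum_(a <- L | 0 < a) p a + 2^-1 * p 0 = \sum_(a <- L) heaviside a * p a.
Proof.
move=> uniqL suppp.
have p0E : p 0 = \sum_(a <- L | a == 0) p a.
  have [L0 | L0] := boolP (0 \in L).
    by rewrite -big_filter (filter_pred1_uniq uniqL L0) big_seq1.
  rewrite suppp // big1_seq // => a /andP[/eqP a0 aL].
  by rewrite -a0 aL in L0.
rewrite p0E mulr_sumr (big_mkcond (fun a => 0 < a)) [in X in _ + X]big_mkcond.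
rewrite -big_split; apply: eq_bigr => a _ /=.
rewrite /heaviside; case: ltrgtP => [_ | _ | <-].
- by rewrite mul1r addr0.
- by rewrite mul0r addr0.
- by rewrite add0r.
Qed.

Lemma sum_affine_bound (L : seq R) (p f : R -> R) (c d : R) :
  (forall a, 0 <= p a) -> \sum_(a <- L) p a = 1 ->
  {in L, forall a, f a <= c + d * a} ->
  \sum_(a <- L) f a * p a <= c + d * \sum_(a <- L) a * p a.
Proof.
move=> p_ge0 p_sum1 f_le.
have -> : c + d * \sum_(a <- L) a * p a = \sum_(a <- L) (c + d * a) * p a.
  under [RHS]eq_bigr do rewrite mulrDl -mulrA.
  by rewrite big_split /= -!mulr_sumr p_sum1 mulr1.
rewrite big_seq [leRHS]big_seq; apply: ler_sum => a aL.
by rewrite ler_wpM2r // f_le.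
Qed.

Lemma xplus_gt0 {L : seq R} : has (fun x => 0 < x) L -> 0 < xplus L.
Proof.
rewrite has_filter => posL_nnil.
by have := bigmin_head_mem 0 _ posL_nnil; rewrite mem_filter => /andP[].
Qed.

Lemma xplus_le {L : seq R} {a : R} : a \in L -> 0 < a -> xplus L <= a.
Proof. by move=> aL a_gt0; apply: ge_bigmin_seq; rewrite ?mem_filter ?a_gt0. Qed.

Lemma xminus_gt0 {L : seq R} : has (fun x => x < 0) L -> 0 < xminus L.
Proof.
rewrite has_filter => negL_nnil; rewrite oppr_gt0.
by have := bigmin_head_mem 0 _ negL_nnil; rewrite mem_filter => /andP[].
Qed.

Lemma xminus_le {L : seq R} {a : R} : a \in L -> a < 0 -> - xminus L <= a.
Proof.
by move=> aL a_lt0; rewrite opprK; apply: ge_bigmin_seq; rewrite ?mem_filter ?a_lt0.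
Qed.

Lemma heaviside_le_P3G_affine (L : seq R) :
  exists d, {in L, forall a, heaviside a <= P3G L + d * a}.
Proof.
rewrite /P3G; case: ifP => [/and3P[has_pos has_neg cond] | not_cond].
  have xp_gt0 := xplus_gt0 has_pos; have xm_gt0 := xminus_gt0 has_neg.
  exists (xplus L + xminus L)^-1 => a aL.
  have -> : (1 + xplus L / xminus L)^-1 + (xplus L + xminus L)^-1 * a
            = (a + xminus L) / (xplus L + xminus L).
    by field; rewrite ?gt_eqF ?addr_gt0 ?divr_gt0.
  apply: heaviside_le_chord => //; [exact: xplus_le | exact: xminus_le |].
  by move=> a0; case/orP: cond => [/ltW // | ]; rewrite -a0 aL.
have [has_pos | no_pos] := boolP (has (fun x => 0 < x) L); last first.
  exists 0 => a aL; rewrite mul0r addr0 div1r; apply: heaviside_le_half.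
  by rewrite leNgt; apply: contra no_pos => a_gt0; apply/hasP; exists a.
have xp_gt0 := xplus_gt0 has_pos.
exists (xplus L + xplus L)^-1 => a aL.
have -> : 1 / 2 + (xplus L + xplus L)^-1 * a = (a + xplus L) / (xplus L + xplus L).
  by field; rewrite ?gt_eqF ?addr_gt0.
apply: heaviside_le_chord => // [|a_lt0]; first exact: xplus_le.
have has_neg : has (fun x => x < 0) L by apply/hasP; exists a.
move: not_cond; rewrite has_pos has_neg /= => /negbT; rewrite negb_or -leNgt.
by case/andP=> xm_le _; apply: le_trans (xminus_le aL a_lt0); rewrite lerN2.
Qed.

End HeavisideBound.

Theorem mainTheorem1 (R : realFieldType) (S : Type) (L : seq R)
    (Pr : S -> 'I_3 -> R -> R)
    (HL : uniq L)
    (Hnn : forall s k a, 0 <= Pr s k a)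
    (Hsupp : forall s k a, a \notin L -> Pr s k a = 0)
    (Hsum : forall s k, \sum_(a <- L) Pr s k a = 1)
    (Hposs : forall a, a \in L -> exists s k, 0 < Pr s k a)
    (HM : forall s, \sum_(k < 3) expect L (Pr s) k = 0) :
  forall s : S, P3 L (Pr s) <= P3G L.
Proof.
move=> s; have [d heaviside_le] := heaviside_le_P3G_affine L.
have term_le k : \sum_(a <- L | 0 < a) Pr s k a + 2^-1 * Pr s k 0
                 <= P3G L + d * expect L (Pr s) k.
  by rewrite sum_heavisideE //; [apply: sum_affine_bound | exact: Hsupp].
have sum_le : \sum_(k < 3) (\sum_(a <- L | 0 < a) Pr s k a + 2^-1 * Pr s k 0)
              <= P3G L *+ 3.
  apply: le_trans (ler_sum _ (fun k _ => term_le k)) _.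
  by rewrite big_split /= -mulr_sumr HM mulr0 addr0 sumr_const card_ord.
by rewrite /P3 ler_pdivrMl // mulr_natl.
Qed.
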